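(* Let $d=1$, let $(X,M)$ have joint law $\mathbb{P}_{X,M}$ with $X\in\mathbb{R}$ and $M\in\{0,1\}$ ($M=0$: $X$ observed), and assume the model $\{P_\theta:\theta\in\Theta\}$ is well specified: $\mathbb{P}_X=P_{\theta^*}$ for some $\theta^*\in\Theta$. Let $\pi(x)=\mathbb{P}[M=0\mid X=x]$ and $\pi=\mathbb{P}[M=0]=\mathbb{E}_{X\sim\mathbb{P}_X}[\pi(X)]>0$, and let $$\theta_\infty^{\mathrm{ML}}\in\arg\min_{\theta\in\Theta}\mathbb{E}_{M\sim\mathbb{P}_M}\big[\mathrm{KL}(\mathbb{P}_{X\mid M}^{(M)}\,\|\,P_\theta^{(M)})\big]=\arg\min_{\theta\in\Theta}\mathrm{KL}(\mathbb{P}_{X\mid M=0}\,\|\,P_\theta).$$ Then $$ \mathrm{TV}^2\big(P_{\theta_\infty^{\mathrm{ML}}},P_{\theta^*}\big)\le 2\cdot\frac{\mathbb{V}_{X\sim\mathbb{P}_X}[\pi(X)]}{\pi^2}. $$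
   Context: $\mathbb{P}_X$ is the law of $X$ (with a Lebesgue density), $\mathbb{P}_{X\mid M=0}$ the conditional law of $X$ given $M=0$. In expectations over $M$ the empty pattern ($M=1$, i.e. $X$ missing) is excluded, which is why the middle expression reduces to the last one. $\mathrm{KL}(P_1\|P_2)=\int\log(p_1/p_2)p_1$ if $P_1\ll P_2$ and $+\infty$ otherwise; $\mathrm{TV}$ is the total variation distance. $\{P_\theta\}$ is a parametric family of distributions on $\mathbb{R}$ with Lebesgue densities. *)

From mathcomp Require Import all_boot all_order all_algebra.
From mathcomp Require Import all_classical all_reals all_analysis.
Set Implicit Arguments. Unset Strict Implicit. Unset Printing Implicit Defensive.
Import Order.TTheory GRing.Theory Num.Theory.
Local Open Scope classical_set_scope.
Local Open Scope ring_scope.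

Section defs.
Variable R : realType.
Local Notation leb := (@lebesgue_measure.lebesgue_measure R).

Definition is_density (f : R -> R) : Prop :=
  measurable_fun setT f /\ (forall x, 0 <= f x) /\
  (\int[leb]_x (f x)%:E = 1)%E.

Definition dens_meas (f : R -> R) (A : set R) : \bar R :=
  (\int[leb]_(x in A) (f x)%:E)%E.

Definition abs_cont (P1 P2 : set R -> \bar R) : Prop :=
  forall A, measurable A -> P2 A = 0%E -> P1 A = 0%E.

Definition KL (q p : R -> R) : \bar R :=
  if `[< abs_cont (dens_meas q) (dens_meas p) >]
  then (\int[leb]_x (q x * ln (q x / p x))%:E)%E
  else +oo%E.

Definition TV (P1 P2 : set R -> \bar R) : \bar R :=
  ereal_sup [set (`|P1 A - P2 A|)%E | A in measurable].

(* pi = P[M = 0] = E_{X ~ P_X}[pi(X)], X with density pX. *)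
Definition prob_obs (pi pX : R -> R) : R :=
  Rintegral leb setT (fun x => pi x * pX x).

Definition var_obs (pi pX : R -> R) : R :=
  Rintegral leb setT (fun x => (pi x - prob_obs pi pX) ^+ 2 * pX x).

(* Density of the conditional law P_{X | M = 0}: pi(x) pX(x) / P[M=0]. *)
Definition cond_obs_density (pi pX : R -> R) (x : R) : R :=
  pi x * pX x / prob_obs pi pX.
End defs.

From mathcomp Require Import all_boot all_order all_algebra.
From mathcomp Require Import all_classical all_reals all_analysis.
From mathcomp Require Import ring lra.
From mathcomp Require Import measurable_realfun.
Import Order.TTheory GRing.Theory Num.Theory.
Local Open Scope classical_set_scope.
Local Open Scope ring_scope.

(* Write c = P[M = 0] and w = pi / c.  The conditional density is q = w p⋆, and w has
   mean 1 under p⋆, so chi := int (w - 1)^2 p⋆ = Var[pi(X)] / c^2 is the chi-square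
   divergence of q from p⋆.  From x ln x <= x (x - 1) we get KL(q || p⋆) <= chi, hence
   KL(q || p_ML) <= chi by minimality.  Integrating a pointwise lower bound of q ln (q / p)
   in terms of |q - p| gives the Pinsker-type bound ||q - p_ML||_1^2 <= 3 KL(q || p_ML),
   and Cauchy-Schwarz gives ||q - p⋆||_1^2 <= chi.  Since TV <= (||q - p_ML||_1 +
   ||q - p⋆||_1) / 2, we get TV^2 <= ((sqrt 3 + 1) / 2)^2 chi <= 2 chi: the constant 3
   (instead of Pinsker's sharp 2) costs nothing in the end. *)

Section real_inequalities.
Context {R : realType}.
Implicit Types l p q s w x : R.

Lemma ln_ge_1_subV s : 0 < s -> 1 - s^-1 <= ln s.
Proof.
move=> s_gt0.
have sV_gt0 : 0 < s^-1 by rewrite invr_gt0.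
have := @le_ln1Dx _ (s^-1 - 1) ltac:(lra); rewrite addrC subrK lnV ?posrE //; lra.
Qed.

Lemma xlnx_sub_ge x : 0 <= x ->
  3 * (x - 1) ^+ 2 <= (x * ln x - x + 1) * (4 * x + 5).
Proof.
rewrite le_eqVlt => /predU1P[<-|x_gt0]; first by rewrite ln0 // mulr0; lra.
(* Write x = s^3 and use ln s >= 1 - 1/s; what remains is a polynomial inequality in s. *)
pose s := expR (ln x / 3).
have s_gt0 : 0 < s by apply: expR_gt0.
have s3 : x = s ^+ 3.
  by rewrite /s -expRM_natr mulfVK ?lnK ?posrE // pnatr_eq0.
have xlnx_ge : 3 * s ^+ 3 - 3 * s ^+ 2 <= x * ln x.
  have -> : ln x = 3 * ln s by rewrite s3 lnXn // mulr_natl.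
  rewrite s3.
  have -> : 3 * s ^+ 3 - 3 * s ^+ 2 = s ^+ 3 * (3 * (1 - s^-1)).
    by field; rewrite gt_eqF.
  apply: ler_wpM2l; first by rewrite exprn_ge0 ?ltW.
  by apply: ler_wpM2l => //; apply: ln_ge_1_subV.
have poly_ge0 : 0 <= (2 * s ^+ 3 - 3 * s ^+ 2 + 1) * (4 * s ^+ 3 + 5)
                     - 3 * (s ^+ 3 - 1) ^+ 2.
  have -> : (2 * s ^+ 3 - 3 * s ^+ 2 + 1) * (4 * s ^+ 3 + 5)
            - 3 * (s ^+ 3 - 1) ^+ 2 = ((s - 1) ^+ 2) ^+ 2 * (5 * s ^+ 2 + 8 * s + 2).
    by ring.
  by apply: mulr_ge0; [apply/exprn_ge0/sqr_ge0 | nra].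
have W_ge0 : 0 <= 4 * s ^+ 3 + 5 by have := exprn_gt0 3 s_gt0; lra.
have : 0 <= (x * ln x - (3 * s ^+ 3 - 3 * s ^+ 2)) * (4 * s ^+ 3 + 5).
  by apply: mulr_ge0; lra.
rewrite s3; nra.
Qed.

Lemma mul_ln_div_ge l q p : 0 <= q -> 0 < p ->
  2 * l * `|q - p| + (q - p) - l ^+ 2 / 3 * (4 * q + 5 * p) <= q * ln (q / p).
Proof.
move=> q_ge0 p_gt0.
have [x x_ge0 ->] : exists2 x, 0 <= x & q = x * p.
  by exists (q / p); [rewrite divr_ge0 // ltW | rewrite mulfVK // gt_eqF].
have -> : `|x * p - p| = `|x - 1| * p.
  by rewrite -[in RHS](gtr0_norm p_gt0) -normrM mulrBl mul1r.
have -> : 2 * l * (`|x - 1| * p) + (x * p - p) - l ^+ 2 / 3 * (4 * (x * p) + 5 * p)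
    = (2 * l * `|x - 1| + (x - 1) - l ^+ 2 / 3 * (4 * x + 5)) * p by ring.
rewrite mulfK ?gt_eqF // [x * p * _]mulrAC ler_pM2r //.
have abs_sqr : `|x - 1| ^+ 2 = (x - 1) ^+ 2 by rewrite real_normK // num_real.
have W_gt0 : 0 < 4 * x + 5 by lra.
(* Complete the square in l: with W = 4x + 5 and phi = x ln x - x + 1, the gap is
   ((3 |x - 1| - l W)^2 + 3 W phi - 9 (x - 1)^2) / (3 W), and 3 W phi >= 9 (x - 1)^2. *)
rewrite -subr_ge0.
have -> : x * ln x - (2 * l * `|x - 1| + (x - 1) - l ^+ 2 / 3 * (4 * x + 5))
    = ((x * ln x - x + 1) * (4 * x + 5) * 3 - 9 * (x - 1) ^+ 2
       + (3 * `|x - 1| - l * (4 * x + 5)) ^+ 2) / (3 * (4 * x + 5)).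
  by rewrite -abs_sqr; field; lra.
have phi_ge := xlnx_sub_ge x x_ge0.
have sqr_gap_ge0 := sqr_ge0 (3 * `|x - 1| - l * (4 * x + 5)).
by apply: divr_ge0; nra.
Qed.

Lemma mul_ln_ratio_le w p : 0 <= w -> 0 <= p ->
  w * p * ln (w * p / p) <= (w - 1) ^+ 2 * p + (w * p - p).
Proof.
move=> w_ge0; rewrite le_eqVlt => /predU1P[<-|p_gt0].
  by rewrite !mulr0 subrr addr0 mul0r.
rewrite mulfK ?gt_eqF //.
have -> : (w - 1) ^+ 2 * p + (w * p - p) = w * p * (w - 1) by ring.
move: w_ge0; rewrite le_eqVlt => /predU1P[<-|w_gt0]; first by rewrite !mul0r.
apply: ler_wpM2l; first by rewrite mulr_ge0 // ltW.
by have := @le_ln1Dx _ (w - 1) ltac:(lra); rewrite addrC subrK.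
Qed.

Lemma sqr_le_of_half_sum (t a b c : R) : 0 <= t -> t <= (a + b) / 2 ->
  0 <= a -> 0 <= b -> a ^+ 2 <= 3 * c -> b ^+ 2 <= c -> t ^+ 2 <= 2 * c.
Proof.
move=> t_ge0 t_le a_ge0 b_ge0 a2 b2.
have : 0 <= ((a + b) / 2 - t) * ((a + b) / 2 + t) by apply: mulr_ge0; lra.
have := sqr_ge0 (a - b); nra.
Qed.

End real_inequalities.

Section integrals.
Context {d} {T : measurableType d} {R : realType} {mu : {measure set T -> \bar R}}.
Local Notation integrable f := (mu.-integrable setT (EFin \o f)).
Implicit Types f g h : T -> R.

Lemma integrable_add {f g} : integrable f -> integrable g ->
  integrable (fun x => f x + g x).
Proof. by move=> fi gi; apply: eq_integrable (integrableD _ fi gi). Qed.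

Lemma integrable_sub {f g} : integrable f -> integrable g ->
  integrable (fun x => f x - g x).
Proof. by move=> fi gi; apply: eq_integrable (integrableB _ fi gi). Qed.

Lemma integrable_scale (k : R) {f} : integrable f -> integrable (fun x => k * f x).
Proof. by move=> fi; apply: eq_integrable (integrableZl _ k fi). Qed.

Lemma integrable_norm {f} : integrable f -> integrable (fun x => `|f x|).
Proof. by move=> fi; apply: eq_integrable (integrable_abse fi). Qed.

Lemma integrable_dominated {g f} (k : R) : measurable_fun setT g -> integrable f ->
  (forall x, `|g x| <= k * f x) -> integrable g.
Proof.
move=> mg fi g_le; apply: (le_integrable measurableT _ _ (integrable_scale k fi)).
  exact/measurable_EFinP.
by move=> x _; rewrite /= lee_fin (le_trans (g_le x)) // ler_norm.
Qed.

Lemma EFin_Rintegral f : integrable f ->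
  (\int[mu]_x f x)%:E = (\int[mu]_x (f x)%:E)%E.
Proof. by move=> fi; rewrite fineK // integrable_fin_num. Qed.

Lemma Rintegral_comb (a b : R) f g : integrable f -> integrable g ->
  \int[mu]_x (a * f x + b * g x) = a * \int[mu]_x f x + b * \int[mu]_x g x.
Proof.
move=> fi gi; rewrite RintegralD ?integrable_scale //.
by rewrite !RintegralZl.
Qed.

(* Neither side needs to be integrable: compare positive and negative parts separately. *)
Lemma le_integral_measurable (u v : T -> \bar R) :
  measurable_fun setT u -> measurable_fun setT v -> (forall x, u x <= v x)%E ->
  (\int[mu]_x u x <= \int[mu]_x v x)%E.
Proof.
move=> mu_ mv uv.
have uv_in : {in setT, forall x, (u x <= v x)%E} by move=> x _; exact: uv.
rewrite integralE [leRHS]integralE leeB //.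
- apply: ge0_le_integral => //; try exact: measurable_funepos.
  by move=> x _; apply: (funepos_le uv_in); rewrite in_setT.
- apply: ge0_le_integral => //; try exact: measurable_funeneg.
  by move=> x _; apply: (funeneg_le uv_in); rewrite in_setT.
Qed.

Lemma Rintegral_dist_triangle f g h :
  integrable f -> integrable g -> integrable h ->
  \int[mu]_x `|f x - h x| <= \int[mu]_x `|f x - g x| + \int[mu]_x `|g x - h x|.
Proof.
move=> fi gi hi.
rewrite -RintegralD ?integrable_norm ?integrable_sub //.
apply: le_Rintegral => //.
- by apply/integrable_norm/integrable_sub.
- by apply/integrable_add; apply/integrable_norm/integrable_sub.
- by move=> x _; apply: ler_distD.
Qed.

(* The integrals of f - g over A and over its complement cancel, since f and g have equal mass. *)
Lemma mul2_dist_Rintegral_le {f g} {A : set T} : measurable A ->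
  integrable f -> integrable g -> \int[mu]_x f x = \int[mu]_x g x ->
  2 * `|\int[mu]_(x in A) f x - \int[mu]_(x in A) g x| <= \int[mu]_x `|f x - g x|.
Proof.
move=> mA fi gi fg.
have mAC : measurable (~` A) by exact: measurableC.
have fgi := integrable_sub fi gi.
have iS (k : T -> R) B : measurable B -> integrable k -> mu.-integrable B (EFin \o k).
  by move=> mB; apply: integrableS.
have split_setT (k : T -> R) : integrable k ->
    \int[mu]_x k x = \int[mu]_(x in A) k x + \int[mu]_(x in ~` A) k x.
  move=> ki; rewrite -Rintegral_setU ?setUCr //.
  by rewrite /disj_set setICr.
have masses : \int[mu]_(x in ~` A) (f x - g x) = - \int[mu]_(x in A) (f x - g x).
  apply/eqP; rewrite -addr_eq0 addrC -split_setT // RintegralB //.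
  by rewrite fg subrr.
rewrite -(RintegralB mA (iS _ _ mA fi) (iS _ _ mA gi)).
rewrite (split_setT _ (integrable_norm fgi)).
have := le_normr_Rintegral mA (iS _ _ mA fgi).
have := le_normr_Rintegral mAC (iS _ _ mAC fgi).
rewrite masses normrN; lra.
Qed.

End integrals.

Section densities.
Context {R : realType}.
Local Notation leb := (@lebesgue_measure R).
Local Notation integrable f := (leb.-integrable setT (EFin \o f)).
Implicit Types f g h p : R -> R.

Definition L1dist f g : R := \int[leb]_x `|f x - g x|.

Lemma density_integrable {f} : is_density f -> integrable f.
Proof.
move=> [mf [f_ge0 f1]]; apply/integrableP; split; first exact/measurable_EFinP.
under eq_integral do rewrite /= ger0_norm //.
by rewrite f1 ltry.
Qed.

Lemma density_Rintegral {f} : is_density f -> \int[leb]_x f x = 1.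
Proof. by move=> [_ [_ f1]]; rewrite /Rintegral f1. Qed.

Lemma dens_measE {f} {A : set (measurableTypeR R)} : is_density f -> measurable A ->
  dens_meas f A = (\int[leb]_(x in A) f x)%:E.
Proof.
move=> f_dens mA; rewrite /Rintegral fineK // integrable_fin_num //.
exact: integrableS measurableT mA (subsetT _) (density_integrable f_dens).
Qed.

Lemma integrable_bounded_mul {p g} (k : R) : is_density p ->
  measurable_fun setT g -> (forall x, `|g x| <= k) ->
  integrable (fun x => g x * p x).
Proof.
move=> p_dens mg g_le; have [mp [p_ge0 _]] := p_dens.
apply: (integrable_dominated k _ (density_integrable p_dens)) => [|x].
  exact: measurable_funM.
by rewrite normrM (ger0_norm (p_ge0 x)) ler_wpM2r.
Qed.

Lemma L1dist_ge0 f g : 0 <= L1dist f g.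
Proof. by apply: Rintegral_ge0 => x _. Qed.

Lemma L1distC f g : L1dist f g = L1dist g f.
Proof. by apply: eq_Rintegral => x _; rewrite distrC. Qed.

Lemma L1dist_triangle f g h : is_density f -> is_density g -> is_density h ->
  L1dist f h <= L1dist f g + L1dist g h.
Proof.
move=> f_dens g_dens h_dens.
by apply: Rintegral_dist_triangle; apply: density_integrable.
Qed.

Lemma TV_ge0 f g : (0 <= TV (dens_meas f) (dens_meas g))%E.
Proof.
apply: ereal_sup_ubound; exists set0 => //.
by rewrite /dens_meas !integral_set0 sube0 abse0.
Qed.

Lemma TV_le_L1dist {f g} : is_density f -> is_density g ->
  (TV (dens_meas f) (dens_meas g) <= (L1dist f g / 2)%:E)%E.
Proof.
move=> f_dens g_dens; apply: ge_ereal_sup => _ [A mA0 <-].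
have mA : measurable (A : set (measurableTypeR R)) := mA0.
rewrite (dens_measE f_dens mA) (dens_measE g_dens mA) /= lee_fin.
have := mul2_dist_Rintegral_le mA (density_integrable f_dens)
  (density_integrable g_dens).
rewrite (density_Rintegral f_dens) (density_Rintegral g_dens) => /(_ erefl).
rewrite -/(L1dist f g); lra.
Qed.

Lemma TV_sqr_le_via {h f g} {c : R} : is_density f -> is_density g -> is_density h ->
  L1dist h f ^+ 2 <= 3 * c -> L1dist h g ^+ 2 <= c ->
  (TV (dens_meas f) (dens_meas g) ^+ 2 <= (2 * c)%:E)%E.
Proof.
move=> f_dens g_dens h_dens hf hg.
have TV_le : (TV (dens_meas f) (dens_meas g) <= ((L1dist h f + L1dist h g) / 2)%:E)%E.
  apply: (le_trans (TV_le_L1dist f_dens g_dens)); rewrite lee_fin ler_pM2r //.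
  by rewrite (L1distC h f); apply: L1dist_triangle.
have TV_fin : TV (dens_meas f) (dens_meas g) \is a fin_num.
  by rewrite ge0_fin_numE ?TV_ge0 // (le_lt_trans TV_le) ?ltry.
move: TV_le (TV_ge0 f g); rewrite -(fineK TV_fin) -EFin_expe !lee_fin => TV_le TV_ge0.
exact: sqr_le_of_half_sum TV_ge0 TV_le (L1dist_ge0 _ _) (L1dist_ge0 _ _) hf hg.
Qed.

End densities.

Section kullback_leibler.
Context {R : realType}.
Local Notation leb := (@lebesgue_measure R).
Local Notation integrable f := (leb.-integrable setT (EFin \o f)).
Implicit Types f q : R -> R.

Lemma measurable_mul_ln_div q f : measurable_fun setT q -> measurable_fun setT f ->
  (forall x, 0 <= f x) -> measurable_fun setT (fun x => q x * ln (q x / f x)).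
Proof.
move=> mq mf f_ge0.
have mfV : measurable_fun setT (fun x => (f x)^-1).
  rewrite (_ : (fun x => _) = (fun x => f x `^ (-1))).
    exact: measurableT_comp (measurable_powR _) mf.
  by apply/funext => x; rewrite powR_inv1.
by apply: measurable_funM => //; apply: measurableT_comp => //; apply: measurable_funM.
Qed.

Lemma abs_cont_null_mass {q f} : is_density q -> is_density f ->
  abs_cont (dens_meas q) (dens_meas f) ->
  \int[leb]_x (if f x == 0 then q x else 0) = 0.
Proof.
move=> q_dens [mf [f_ge0 _]] qf_ac.
pose Z : set (measurableTypeR R) := f @^-1` [set 0].
have mZ : measurable Z by rewrite -[Z]setTI; apply: mf => //; exact: measurable_set1.
have fZ : dens_meas f Z = 0%E.
  rewrite /dens_meas (eq_integral (fun=> 0%E)) ?integral0 //.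
  by move=> x /set_mem /= ->.
have qZ : \int[leb]_(x in Z) q x = 0.
  by have := qf_ac Z mZ fZ; rewrite (dens_measE q_dens mZ) => -[].
rewrite -[RHS]qZ [RHS]Rintegral_mkcond; apply: eq_Rintegral => x _.
rewrite patchE; case: (eqVneq (f x) 0) => [fx0|fx_neq0].
  by rewrite mem_set.
by rewrite memNset //; apply/eqP.
Qed.

Lemma KL_ge_L1dist {q f} (l : R) : is_density q -> is_density f ->
  abs_cont (dens_meas q) (dens_meas f) ->
  ((2 * l * L1dist q f - 3 * l ^+ 2)%:E <= KL q f)%E.
Proof.
move=> q_dens f_dens qf_ac.
have [mq [q_ge0 _]] := q_dens; have [mf [f_ge0 _]] := f_dens.
have qi := density_integrable q_dens; have fi := density_integrable f_dens.
(* Where f vanishes, q ln (q / f) is the junk value 0 and the pointwise bound fails;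
   there h is lowered by z, whose integral is 0 by absolute continuity. *)
pose z x := if f x == 0 then q x else 0.
have zi : integrable z.
  apply: (integrable_dominated 1 _ qi) => [|x].
    by apply: measurable_fun_ifT => //; apply: measurable_fun_eqr.
  by rewrite /z mul1r; case: ifP => _; rewrite ?normr0 ?ger0_norm.
pose a := 1 - l ^+ 2 * 4 / 3; pose b := - 1 - l ^+ 2 * 5 / 3.
pose h x := 2 * l * `|q x - f x| + (a * q x + b * f x) - (2 * l + 1) * z x.
have di : integrable (fun x => 2 * l * `|q x - f x|).
  by apply/integrable_scale/integrable_norm/integrable_sub.
have ci : integrable (fun x => a * q x + b * f x).
  by apply: integrable_add; apply: integrable_scale.
have hi : integrable h.
  by apply: integrable_sub (integrable_scale _ zi); apply: integrable_add.
have h_mass : \int[leb]_x h x = 2 * l * L1dist q f - 3 * l ^+ 2.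
  rewrite /h /L1dist (RintegralB measurableT (integrable_add di ci) (integrable_scale _ zi)).
  rewrite (RintegralD measurableT di ci) Rintegral_comb //.
  rewrite (RintegralZl _ measurableT (integrable_norm (integrable_sub qi fi))).
  rewrite (RintegralZl _ measurableT zi).
  rewrite (density_Rintegral q_dens) (density_Rintegral f_dens).
  by rewrite (abs_cont_null_mass q_dens f_dens qf_ac) /a /b; field.
rewrite /KL asboolT // -h_mass EFin_Rintegral //.
apply: le_integral_measurable.
- exact: measurable_int hi.
- by apply/measurable_EFinP; apply: measurable_mul_ln_div.
move=> x; rewrite lee_fin /h /z.
have := f_ge0 x; rewrite le_eqVlt => /predU1P[fx0|fx_gt0].
  rewrite -fx0 eqxx invr0 !mulr0 ln0 // mulr0 subr0 addr0 ger0_norm //.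
  by have := q_ge0 x; rewrite /a; nra.
have -> : a * q x + b * f x = (q x - f x) - l ^+ 2 / 3 * (4 * q x + 5 * f x).
  by rewrite /a /b; ring.
by rewrite gt_eqF // mulr0 subr0 addrA; apply: mul_ln_div_ge.
Qed.

Lemma L1dist_sqr_le_KL {q f} {k : R} : is_density q -> is_density f ->
  (KL q f <= k%:E)%E -> L1dist q f ^+ 2 <= 3 * k.
Proof.
move=> q_dens f_dens KL_le.
have qf_ac : abs_cont (dens_meas q) (dens_meas f).
  by move: KL_le; rewrite /KL; case: asboolP.
have := le_trans (KL_ge_L1dist (L1dist q f / 3) q_dens f_dens qf_ac) KL_le.
rewrite lee_fin.
have -> : 2 * (L1dist q f / 3) * L1dist q f - 3 * (L1dist q f / 3) ^+ 2
          = L1dist q f ^+ 2 / 3 by field.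
lra.
Qed.

End kullback_leibler.

Section likelihood_ratio.
Context {R : realType}.
Local Notation leb := (@lebesgue_measure R).
Local Notation integrable f := (leb.-integrable setT (EFin \o f)).

Definition chi2 (w p : R -> R) : R := \int[leb]_x ((w x - 1) ^+ 2 * p x).

Context {p w : R -> R} {k : R}.
Hypotheses (p_dens : is_density p) (mw : measurable_fun setT w)
  (w_bound : forall x, 0 <= w x <= k) (w_mass : \int[leb]_x (w x * p x) = 1).

Local Notation wp := (fun x => w x * p x).

Let p_ge0 x : 0 <= p x. Proof. by case: p_dens => _ []. Qed.

Let wp_integrable : integrable wp.
Proof.
apply: (integrable_bounded_mul k p_dens mw) => x.
by case/andP: (w_bound x) => w_ge0 w_le; rewrite ger0_norm.
Qed.

Let chi2_integrable : integrable (fun x => (w x - 1) ^+ 2 * p x).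
Proof.
apply: (integrable_bounded_mul ((k + 1) ^+ 2) p_dens) => [|x].
  by apply/measurable_funX/measurable_funB.
have /andP[w_ge0 w_le] := w_bound x.
by rewrite ger0_norm ?sqr_ge0 //; nra.
Qed.

Lemma ratio_density : is_density wp.
Proof.
split; first by apply: measurable_funM => //; case: p_dens.
split; first by move=> x; have /andP[w_ge0 _] := w_bound x; rewrite mulr_ge0.
by rewrite -EFin_Rintegral // w_mass.
Qed.

Lemma ratio_abs_cont : abs_cont (dens_meas wp) (dens_meas p).
Proof.
move=> A mA0; have mA : measurable (A : set (measurableTypeR R)) := mA0.
rewrite (dens_measE p_dens mA) (dens_measE ratio_density mA).
move=> -[p_null]; congr (_%:E); apply/eqP; rewrite eq_le.
have wp_ge0 x : 0 <= w x * p x by have /andP[w_ge0 _] := w_bound x; rewrite mulr_ge0.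
rewrite Rintegral_ge0 ?andbT //.
have iA f : integrable f -> leb.-integrable A (EFin \o f).
  exact: integrableS measurableT mA (subsetT _).
apply: (le_trans (le_Rintegral mA (iA _ wp_integrable)
  (iA _ (integrable_scale k (density_integrable p_dens))) _)).
  by move=> x _; have /andP[_ w_le] := w_bound x; rewrite ler_wpM2r.
by rewrite RintegralZl ?iA ?density_integrable // p_null mulr0.
Qed.

Lemma KL_ratio_le_chi2 : (KL wp p <= (chi2 w p)%:E)%E.
Proof.
rewrite /KL asboolT; last exact: ratio_abs_cont.
have p_int := density_integrable p_dens.
have bound_integrable :
    integrable (fun x => (w x - 1) ^+ 2 * p x + (w x * p x - p x)).
  by apply: integrable_add => //; apply: integrable_sub.
have <- : \int[leb]_x ((w x - 1) ^+ 2 * p x + (w x * p x - p x)) = chi2 w p.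
  rewrite RintegralD ?integrable_sub // RintegralB //.
  by rewrite w_mass (density_Rintegral p_dens) subrr addr0.
rewrite EFin_Rintegral //; apply: le_integral_measurable.
- by apply/measurable_EFinP; apply: measurable_mul_ln_div;
    [apply: measurable_funM | |]; case: p_dens.
- exact: measurable_int bound_integrable.
- move=> x; rewrite lee_fin; apply: mul_ln_ratio_le => //.
  by have /andP[] := w_bound x.
Qed.

Lemma L1dist_ratio_sqr_le_chi2 : L1dist wp p ^+ 2 <= chi2 w p.
Proof.
set D := L1dist _ _.
have p_int := density_integrable p_dens.
have dist_integrable : integrable (fun x => `|w x * p x - p x|).
  by apply/integrable_norm/integrable_sub.
(* Cauchy-Schwarz: integrate 0 <= (|w - 1| - D)^2 p. *)
suff : 2 * D * D <= chi2 w p + D ^+ 2 by nra.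
have -> : 2 * D * D = \int[leb]_x (2 * D * `|w x * p x - p x|).
  by rewrite (RintegralZl _ measurableT dist_integrable).
have -> : chi2 w p + D ^+ 2 = \int[leb]_x ((w x - 1) ^+ 2 * p x + D ^+ 2 * p x).
  rewrite (RintegralD measurableT chi2_integrable (integrable_scale _ p_int)).
  by rewrite (RintegralZl _ measurableT p_int) (density_Rintegral p_dens) mulr1.
apply: le_Rintegral => //.
- exact: integrable_scale.
- exact: integrable_add (integrable_scale _ p_int).
move=> x _.
have -> : w x * p x - p x = (w x - 1) * p x by ring.
rewrite normrM (ger0_norm (p_ge0 x)) -subr_ge0.
have -> : (w x - 1) ^+ 2 * p x + D ^+ 2 * p x - 2 * D * (`|w x - 1| * p x)
    = (`|w x - 1| - D) ^+ 2 * p x.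
  by rewrite -[(w x - 1) ^+ 2]real_normK ?num_real //; ring.
by rewrite mulr_ge0 ?sqr_ge0.
Qed.

End likelihood_ratio.

Section observation.
Context {R : realType}.
Local Notation leb := (@lebesgue_measure R).
Local Notation integrable f := (leb.-integrable setT (EFin \o f)).
Context {ps pi : R -> R}.
Hypotheses (ps_dens : is_density ps) (mpi : measurable_fun setT pi)
  (pi01 : forall x, 0 <= pi x <= 1) (c_gt0 : 0 < prob_obs pi ps).
Local Notation c := (prob_obs pi ps).

Lemma cond_obs_densityE : cond_obs_density pi ps = (fun x => pi x / c * ps x).
Proof. by apply/funext => x; rewrite /cond_obs_density mulrAC. Qed.

Lemma obs_ratio_bound x : 0 <= pi x / c <= c^-1.
Proof.
have /andP[pi_ge0 pi_le1] := pi01 x.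
have cV_gt0 : 0 < c^-1 by rewrite invr_gt0.
apply/andP; split; first by rewrite divr_ge0 // ltW.
nra.
Qed.

Lemma obs_ratio_mass : \int[leb]_x (pi x / c * ps x) = 1.
Proof.
have pips_integrable : integrable (fun x => pi x * ps x).
  apply: (integrable_bounded_mul 1 ps_dens mpi) => x.
  by have /andP[pi_ge0 pi_le1] := pi01 x; rewrite ger0_norm.
transitivity (\int[leb]_x (pi x * ps x) / c).
  rewrite -(RintegralZr _ measurableT pips_integrable).
  by apply: eq_Rintegral => x _; rewrite mulrAC.
by rewrite mulfV ?gt_eqF.
Qed.

Lemma chi2_obs_ratio : chi2 (fun x => pi x / c) ps = var_obs pi ps / c ^+ 2.
Proof.
have sqr_integrable : integrable (fun x => (pi x - c) ^+ 2 * ps x).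
  apply: (integrable_bounded_mul ((1 + c) ^+ 2) ps_dens) => [|x].
    by apply/measurable_funX/measurable_funB.
  have /andP[pi_ge0 pi_le1] := pi01 x.
  have c_ge0 : 0 <= c by apply: ltW.
  have : 0 <= (1 + 2 * c - pi x) * (1 + pi x) by apply: mulr_ge0; lra.
  by rewrite ger0_norm ?sqr_ge0 //; nra.
rewrite /var_obs -RintegralZr //; apply: eq_Rintegral => x _.
by field; rewrite gt_eqF.
Qed.

End observation.

Theorem theorem5 (R : realType) (Theta : Type) (p : Theta -> R -> R)
  (theta_star theta_ML : Theta) (pi : R -> R) :
  (forall th : Theta, is_density (p th)) ->
  measurable_fun setT pi ->
  (forall x, 0 <= pi x <= 1) ->
  0 < prob_obs pi (p theta_star) ->
  (forall th : Theta,
     (KL (cond_obs_density pi (p theta_star)) (p theta_ML)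
      <= KL (cond_obs_density pi (p theta_star)) (p th))%E) ->
  (TV (dens_meas (p theta_ML)) (dens_meas (p theta_star)) ^+ 2
   <= (2 * (var_obs pi (p theta_star) / prob_obs pi (p theta_star) ^+ 2))%:E)%E.
Proof.
move=> p_dens mpi pi01 c_gt0 ML_min.
have star_dens := p_dens theta_star.
have w_meas : measurable_fun setT (fun x => pi x / prob_obs pi (p theta_star)).
  exact: measurable_funM.
have w_bound := obs_ratio_bound pi01 c_gt0.
have w_mass := obs_ratio_mass star_dens mpi pi01 c_gt0.
have q_dens := ratio_density star_dens w_meas w_bound w_mass.
rewrite -(chi2_obs_ratio star_dens mpi pi01 c_gt0).
move: ML_min; rewrite cond_obs_densityE => ML_min.
apply: (TV_sqr_le_via (p_dens theta_ML) star_dens q_dens).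
- apply: (L1dist_sqr_le_KL q_dens (p_dens theta_ML)).
  exact: le_trans (ML_min theta_star) (KL_ratio_le_chi2 star_dens w_meas w_bound w_mass).
- exact: L1dist_ratio_sqr_le_chi2 star_dens w_meas w_bound.
Qed.
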